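(* Let $\Gamma\cup\{\varphi\}$ be a finite set of closed formulas over a basic predicate signature $\Theta$. If $\Gamma\models_{\mathbf{Tm}^*}\varphi$ then $\Gamma\models_{\mathcal T(\mathbf{Tm}^* )}\varphi$.
   Context: Syntax. A basic predicate signature $\Theta$ consists of a nonempty set of predicate symbols, each of arity $\geq1$, and a possibly empty set $C$ of constants (no function symbols, no equality). Terms are variables or constants; formulas: atomic $P\tau_1\ldots\tau_n$, and $\neg\varphi$, $\Box\varphi$, $\forall x\varphi$, $\varphi\to\psi$. $\exists x\varphi$ abbreviates $\neg\forall x\neg\varphi$. $\varphi[x/\tau]$ is substitution of free occurrences of $x$ by $\tau$. Variants $\varphi\sim\psi$: one is obtained from the other by adding/deleting void quantifiers or by renaming bound variables (keeping free variables in the same places). Semantics. Truth values $\{\mathsf T,\mathsf t,\mathsf f,\mathsf F\}$, designated $\{\mathsf T,\mathsf t\}$. $\tilde\neg$: $\mathsf T\mapsto\{\mathsf F\},\mathsf t\mapsto\{\mathsf f\},\mathsf f\mapsto\{\mathsf t\},\mathsf F\mapsto\{\mathsf T\}$. $a\tilde\to b$ (rows $a$, columns $b$ in order $\mathsf T,\mathsf t,\mathsf f,\mathsf F$): row $\mathsf T$: $\{\mathsf T\},\{\mathsf t\},\{\mathsf f\},\{\mathsf F\}$; row $\mathsf t$: $\{\mathsf T\},\{\mathsf T,\mathsf t\},\{\mathsf f\},\{\mathsf f\}$; row $\mathsf f$: $\{\mathsf T\},\{\mathsf T,\mathsf t\},\{\mathsf T,\mathsf t\},\{\mathsf t\}$;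 row $\mathsf F$: all $\{\mathsf T\}$. $\tilde\Box_1\mathsf T=\{\mathsf T,\mathsf t\}$, $\tilde\Box_1a=\{\mathsf f,\mathsf F\}$ for $a\ne\mathsf T$. $\tilde\forall^d_4(X)=\{\min X\}$ for nonempty $X$, order $\mathsf F<\mathsf f<\mathsf t<\mathsf T$. A structure $\mathfrak A=\langle U,\cdot^{\mathfrak A}\rangle$ over $\Theta$: $U\ne\emptyset$, $P^{\mathfrak A}:U^n\to\{\mathsf T,\mathsf t,\mathsf f,\mathsf F\}$, $c^{\mathfrak A}\in U$. $\Theta_U$ adds new constants $\bar a$ for $a\in U\setminus C^{\mathfrak A}$, interpreted by $a$ in $\mathfrak A_U$. A $\mathbf{Tm}^*$-valuation over $\mathfrak A$ is $v:Sen(\Theta_U)\to\{\mathsf T,\mathsf t,\mathsf f,\mathsf F\}$ with $v(Pc_1\ldots c_n)=P^{\mathfrak A}(c_1^{\mathfrak A_U},\ldots,c_n^{\mathfrak A_U})$, $v(\neg\varphi)\in\tilde\neg v(\varphi)$, $v(\Box\varphi)\in\tilde\Box_1v(\varphi)$, $v(\varphi\to\psi)\in v(\varphi)\tilde\to v(\psi)$, $v(\forall x\varphi)\in\tilde\forall^d_4(\{v(\varphi[x/c]):c\in C\cup\bar U\})$, and $v(\varphi)=v(\varphi')$ whenever $\varphi\sim\varphi'$. For formulas with free variables among $x_1,\dots,x_n$, $\Gamma\models_{\mathbf{Tm}^*}\varphi$ iff for every structure $\mathfrak A$ over $\Theta$ and every $\mathbf{Tm}^*$-valuation $v$ over it,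 if $v(\gamma[\vec x/\vec c])\in\{\mathsf T,\mathsf t\}$ for all $\gamma\in\Gamma$ and all $\vec c$ from $C\cup\bar U$, then $v(\varphi[\vec x/\vec c])\in\{\mathsf T,\mathsf t\}$ for all $\vec c$. Tableaux. Let $\bar C=\{c_1,c_2,\ldots\}$ be an infinite set of new constants, $\Theta(\bar C)$ the extended signature. A signed formula is $\mathsf L{:}\varphi$ with $\mathsf L\in\{\mathsf T,\mathsf t,\mathsf f,\mathsf F\}$, $\varphi$ closed over $\Theta(\bar C)$; $\varphi(c)$ means $\varphi[x/c]$. A tableau for a signed formula is a finite tree with that formula at the root, obtained by repeatedly applying a rule to a signed formula on a branch and extending that branch by the alternatives of the rule (separated by $\mid$; each alternative gives a new branch containing the listed signed formulas). Rules: $\mathsf T{:}\neg\varphi/\mathsf F{:}\varphi$; $\mathsf t{:}\neg\varphi/\mathsf f{:}\varphi$; $\mathsf f{:}\neg\varphi/\mathsf t{:}\varphi$; $\mathsf F{:}\neg\varphi/\mathsf T{:}\varphi$; $\mathsf T{:}\Box\varphi/\mathsf T{:}\varphi$; $\mathsf t{:}\Box\varphi/\mathsf T{:}\varphi$; $\mathsf f{:}\Box\varphi/\mathsf t{:}\varphi\mid\mathsf f{:}\varphi\mid\mathsf F{:}\varphi$; $\mathsf F{:}\Box\varphi/\mathsf t{:}\varphi\mid\mathsf f{:}\varphi\mid\mathsf F{:}\varphi$; $\mathsf T{:}(\varphi\to\psi)/\mathsf F{:}\varphi\mid\mathsf t{:}\varphi,\mathsf t{:}\psi\mid\mathsf f{:}\varphi,\mathsf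 t{:}\psi\mid\mathsf f{:}\varphi,\mathsf f{:}\psi\mid\mathsf T{:}\psi$; $\mathsf t{:}(\varphi\to\psi)/\mathsf T{:}\varphi,\mathsf t{:}\psi\mid\mathsf t{:}\varphi,\mathsf t{:}\psi\mid\mathsf f{:}\varphi,\mathsf t{:}\psi\mid\mathsf f{:}\varphi,\mathsf f{:}\psi$; $\mathsf f{:}(\varphi\to\psi)/\mathsf T{:}\varphi,\mathsf f{:}\psi\mid\mathsf t{:}\varphi,\mathsf f{:}\psi\mid\mathsf t{:}\varphi,\mathsf F{:}\psi$; $\mathsf F{:}(\varphi\to\psi)/\mathsf T{:}\varphi,\mathsf F{:}\psi$. Quantifier rules: $(\mathsf T\forall)$ $\mathsf T{:}\forall x\varphi/\mathsf T{:}\varphi(c)$, $c$ any constant, reusable with any constants; $(\mathsf F\forall)$ $\mathsf F{:}\forall x\varphi/\mathsf F{:}\varphi(c)$, $c$ a constant not yet on the branch, usable only once per branch; $(\mathsf t\forall)$ $\mathsf t{:}\forall x\varphi/\mathsf t{:}\varphi(c),\mathsf t{:}\varphi(c')\mid\mathsf t{:}\varphi(c),\mathsf T{:}\varphi(c')$, where $c$ is new on the branch and $c'\neq c$ arbitrary; it is reusable in the sense that afterwards each resulting branch may again be split into a branch with $\mathsf t{:}\varphi(c'')$ and a branch with $\mathsf T{:}\varphi(c''')$ for any $c'',c'''\neq c$; $(\mathsf f\forall)$ $\mathsf f{:}\forall x\varphi/\mathsf f{:}\varphi(c),\mathsf f{:}\varphi(c')\mid\mathsf f{:}\varphi(c),\mathsf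 T{:}\varphi(c')\mid\mathsf f{:}\varphi(c),\mathsf t{:}\varphi(c')$, $c$ new on the branch, $c'\neq c$; reusable in the sense that each resulting branch may be split again into three branches containing $\mathsf f{:}\varphi(c'')$, $\mathsf T{:}\varphi(c''')$, $\mathsf t{:}\varphi(c'''')$ respectively, for any constants different from $c$. A branch is closed if it contains $\mathsf L{:}\varphi$ and $\mathsf L'{:}\varphi'$ with $\varphi\sim\varphi'$ and $\mathsf L\ne\mathsf L'$; a tableau is closed if all its branches are closed. A closed formula $\varphi$ over $\Theta$ is provable, $\models_{\mathcal T(\mathbf{Tm}^* )}\varphi$, if for each $\mathsf L\in\{\mathsf F,\mathsf f\}$ there is a closed tableau starting from $\mathsf L{:}\varphi$. For $\Gamma=\{\gamma_1,\ldots,\gamma_n\}$, $\Gamma\models_{\mathcal T(\mathbf{Tm}^* )}\varphi$ means $\models_{\mathcal T(\mathbf{Tm}^* )}(\gamma_1\to(\gamma_2\to\cdots\to(\gamma_n\to\varphi)\cdots))$. *)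

From Stdlib Require Import List.
From mathcomp Require Import all_boot.

Set Implicit Arguments.
Unset Strict Implicit.
Unset Printing Implicit Defensive.

Inductive V4 : Type := VT | Vt | Vf | VF.

Definition rankV (a : V4) : nat :=
  match a with VF => 0 | Vf => 1 | Vt => 2 | VT => 3 end.
Definition leV (a b : V4) : Prop := rankV a <= rankV b.

Definition designated (a : V4) : Prop := a = VT \/ a = Vt.

Definition negV (a : V4) : V4 :=
  match a with VT => VF | Vt => Vf | Vf => Vt | VF => VT end.

(* b \in tilde-Box_1 a *)
Definition boxS (a b : V4) : Prop :=
  match a with
  | VT => b = VT \/ b = Vt
  | _ => b = Vf \/ b = VF
  end.

(* c \in a tilde-> b *)
Definition impS (a b c : V4) : Prop :=
  match a with
  | VT => c = b
  | Vt => match b with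
          | VT => c = VT
          | Vt => c = VT \/ c = Vt
          | Vf => c = Vf
          | VF => c = Vf
          end
  | Vf => match b with
          | VT => c = VT
          | Vt => c = VT \/ c = Vt
          | Vf => c = VT \/ c = Vt
          | VF => c = Vt
          end
  | VF => c = VT
  end.

Section Syntax.
Variables (P : Type) (ar : P -> nat).

Inductive term (K : Type) : Type := Var of nat | Con of K.

Inductive form (K : Type) : Type :=
  | Atom (p : P) of ('I_(ar p) -> term K)
  | Neg of form K
  | Box of form K
  | All of nat & form K
  | Imp of form K & form K.

Section OverK.
Variable K : Type.

Fixpoint free (x : nat) (f : form K) : Prop :=
  match f with
  | Atom p ts => exists i, ts i = Var K x
  | Neg g => free x g
  | Box g => free x g
  | All y g => y <> x /\ free x g
  | Imp g h => free x g \/ free x h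
  end.

Definition is_closed (f : form K) : Prop := forall x, ~ free x f.

Fixpoint occurs (c : K) (f : form K) : Prop :=
  match f with
  | Atom p ts => exists i, ts i = Con c
  | Neg g => occurs c g
  | Box g => occurs c g
  | All _ g => occurs c g
  | Imp g h => occurs c g \/ occurs c h
  end.

(* simultaneous substitution of terms for FREE variables (not capture-avoiding;
   used only for constants, or for variables under a "free for" side condition) *)
Fixpoint substf (s : nat -> term K) (f : form K) : form K :=
  match f with
  | Atom p ts => Atom (fun i => match ts i with Var y => s y | Con c => Con c end)
  | Neg g => Neg (substf s g)
  | Box g => Box (substf s g)
  | All y g => All y (substf (fun z => if z == y then Var K y else s z) g)
  | Imp g h => Imp (substf s g) (substf s h)
  end.

Definition subst1 (x : nat) (tau : term K) (f : form K) : form K :=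
  substf (fun z => if z == x then tau else Var K z) f.

Definition inst (s : nat -> K) (f : form K) : form K :=
  substf (fun z => Con (s z)) f.

Fixpoint free_for (y x : nat) (f : form K) : Prop :=
  match f with
  | Atom _ _ => True
  | Neg g => free_for y x g
  | Box g => free_for y x g
  | All z g => ~ free x (All z g) \/ (z <> y /\ free_for y x g)
  | Imp g h => free_for y x g /\ free_for y x h
  end.

Inductive variant : form K -> form K -> Prop :=
  | var_refl f : variant f f
  | var_sym f g : variant f g -> variant g f
  | var_trans f g h : variant f g -> variant g h -> variant f h
  | var_void x f : ~ free x f -> variant (All x f) f
  | var_rename x y f : ~ free y f -> free_for y x f ->
      variant (All x f) (All y (subst1 x (Var K y) f))
  | var_neg f g : variant f g -> variant (Neg f) (Neg g)
  | var_box f g : variant f g -> variant (Box f) (Box g)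
  | var_all x f g : variant f g -> variant (All x f) (All x g)
  | var_imp f f' g g' : variant f f' -> variant g g' ->
      variant (Imp f g) (Imp f' g').

End OverK.

Fixpoint mapK (K K' : Type) (h : K -> K') (f : form K) : form K' :=
  match f with
  | Atom p ts => Atom (fun i => match ts i with Var y => Var K' y | Con c => Con (h c) end)
  | Neg g => Neg (mapK h g)
  | Box g => Box (mapK h g)
  | All y g => All y (mapK h g)
  | Imp g h' => Imp (mapK h g) (mapK h h')
  end.

Section Semantics.
Variables (C U : Type) (PA : forall p : P, ('I_(ar p) -> U) -> V4) (cA : C -> U).

(* constants of Theta_U : C together with new constants bar a for a \notin C^A *)
Definition UK : Type := (C + {a : U | forall c, cA c <> a})%type.

Definition uint (k : UK) : U :=
  match k with inl c => cA c | inr a => proj1_sig a end.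

Definition valuation (v : form UK -> V4) : Prop :=
  (forall (p : P) (k : 'I_(ar p) -> UK),
      v (Atom (fun i => Con (k i))) = PA (fun i => uint (k i)))
  /\ (forall f, is_closed f -> v (Neg f) = negV (v f))
  /\ (forall f, is_closed f -> boxS (v f) (v (Box f)))
  /\ (forall f g, is_closed f -> is_closed g -> impS (v f) (v g) (v (Imp f g)))
  /\ (forall x f, is_closed (All x f) ->
        (exists c, v (All x f) = v (subst1 x (Con c) f))
        /\ (forall c, leV (v (All x f)) (v (subst1 x (Con c) f))))
  /\ (forall f g, is_closed f -> is_closed g -> variant f g -> v f = v g).

End Semantics.

Definition sem_conseq (C : Type) (Gamma : seq (form C)) (phi : form C) : Prop :=
  forall (U : Type), inhabited U ->
  forall (PA : forall p : P, ('I_(ar p) -> U) -> V4) (cA : C -> U)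
         (v : form (UK cA) -> V4),
  valuation PA v ->
  (forall g, In g Gamma -> forall s : nat -> UK cA,
      designated (v (inst s (mapK (@inl C _) g)))) ->
  forall s : nat -> UK cA, designated (v (inst s (mapK (@inl C _) phi))).

(* Tableaux: constants of Theta(bar C) are C + nat                        *)

Section Tableaux.
Variable C : Type.
Definition TK : Type := (C + nat)%type.
Definition sform : Type := (V4 * form TK)%type.

(* a branch: its signed formulas, plus a log of the applications of the
   rules (F forall), (t forall), (f forall): (label, formula, new constant c) *)
Record branch : Type := Branch {
  sfs : seq sform;
  qlog : seq (V4 * form TK * TK)
}.

Definition ext (B : branch) (l : seq sform) (lg : seq (V4 * form TK * TK)) : branch :=
  Branch (l ++ sfs B) (lg ++ qlog B).

Definition newc (c : TK) (B : branch) : Prop :=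
  forall s, In s (sfs B) -> ~ occurs c s.2.

Definition prule (s : sform) : option (seq (seq sform)) :=
  match s with
  | (L, Neg g) => Some [:: [:: (negV L, g)]]
  | (VT, Box g) => Some [:: [:: (VT, g)]]
  | (Vt, Box g) => Some [:: [:: (VT, g)]]
  | (Vf, Box g) => Some [:: [:: (Vt, g)]; [:: (Vf, g)]; [:: (VF, g)]]
  | (VF, Box g) => Some [:: [:: (Vt, g)]; [:: (Vf, g)]; [:: (VF, g)]]
  | (VT, Imp a b) => Some [:: [:: (VF, a)]; [:: (Vt, a); (Vt, b)];
                            [:: (Vf, a); (Vt, b)]; [:: (Vf, a); (Vf, b)];
                            [:: (VT, b)]]
  | (Vt, Imp a b) => Some [:: [:: (VT, a); (Vt, b)]; [:: (Vt, a); (Vt, b)];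
                            [:: (Vf, a); (Vt, b)]; [:: (Vf, a); (Vf, b)]]
  | (Vf, Imp a b) => Some [:: [:: (VT, a); (Vf, b)]; [:: (Vt, a); (Vf, b)];
                            [:: (Vt, a); (VF, b)]]
  | (VF, Imp a b) => Some [:: [:: (VT, a); (VF, b)]]
  | _ => None
  end.

Definition inst1 (x : nat) (g : form TK) (c : TK) : form TK := subst1 x (Con c) g.

Inductive qstep (B : branch) : seq branch -> Prop :=
  | q_Tall x g c :
      In (VT, All x g) (sfs B) ->
      qstep B [:: ext B [:: (VT, inst1 x g c)] [::]]
  | q_Fall x g c :
      In (VF, All x g) (sfs B) -> newc c B ->
      (forall c0, ~ In (VF, All x g, c0) (qlog B)) ->
      qstep B [:: ext B [:: (VF, inst1 x g c)] [:: (VF, All x g, c)]]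
  | q_tall x g c c' :
      In (Vt, All x g) (sfs B) -> newc c B -> c' <> c ->
      qstep B [:: ext B [:: (Vt, inst1 x g c); (Vt, inst1 x g c')] [:: (Vt, All x g, c)];
                  ext B [:: (Vt, inst1 x g c); (VT, inst1 x g c')] [:: (Vt, All x g, c)]]
  | q_tall_reuse x g c c'' :
      In (Vt, All x g, c) (qlog B) -> c'' <> c ->
      qstep B [:: ext B [:: (Vt, inst1 x g c'')] [::];
                  ext B [:: (VT, inst1 x g c'')] [::]]
  | q_fall x g c c' :
      In (Vf, All x g) (sfs B) -> newc c B -> c' <> c ->
      qstep B [:: ext B [:: (Vf, inst1 x g c); (Vf, inst1 x g c')] [:: (Vf, All x g, c)];
                  ext B [:: (Vf, inst1 x g c); (VT, inst1 x g c')] [:: (Vf, All x g, c)];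
                  ext B [:: (Vf, inst1 x g c); (Vt, inst1 x g c')] [:: (Vf, All x g, c)]]
  | q_fall_reuse x g c c'' :
      In (Vf, All x g, c) (qlog B) -> c'' <> c ->
      qstep B [:: ext B [:: (Vf, inst1 x g c'')] [::];
                  ext B [:: (VT, inst1 x g c'')] [::];
                  ext B [:: (Vt, inst1 x g c'')] [::]].

Definition step (B : branch) (alts : seq branch) : Prop :=
  (exists s A, In s (sfs B) /\ prule s = Some A /\ alts = map (fun l => ext B l [::]) A)
  \/ qstep B alts.

Definition branch_closed (B : branch) : Prop :=
  exists L f L' f', In (L, f) (sfs B) /\ In (L', f') (sfs B) /\ variant f f' /\ L <> L'.

Inductive closable : branch -> Prop :=
  | cl_closed B : branch_closed B -> closable B
  | cl_step B alts : step B alts -> (forall B', In B' alts -> closable B') -> closable B.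

Definition closed_tableau (s : sform) : Prop := closable (Branch [:: s] [::]).

Definition tab_provable (phi : form C) : Prop :=
  closed_tableau (VF, mapK (@inl C nat) phi) /\ closed_tableau (Vf, mapK (@inl C nat) phi).

Definition tab_conseq (Gamma : seq (form C)) (phi : form C) : Prop :=
  tab_provable (foldr (@Imp _) phi Gamma).

End Tableaux.
End Syntax.

(* If L : Gamma -> phi (L = F or f) has no closed tableau,
   apply every rule fairly -- each signed formula in infinitely many rounds,
   universal rules to every constant seen so far and to ever more new ones --
   always continuing in an open alternative. The union H of the resulting chain
   of open branches is open and saturated. Comparing formulas through their
   locally nameless forms, where variants coincide, a valuation is defined by
   recursion on these forms: the H-label if there is one, otherwise a value
   allowed by the truth tables, quantifiers taking the minimum over the
   constants of H together with the new constants. Saturation makes it a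
   Tm*-valuation over the structure on those constants; it designates Gamma but
   not phi, contradicting Gamma |= phi. *)

From Stdlib Require Import List Classical ClassicalEpsilon FunctionalExtensionality Eqdep.
From mathcomp Require Import all_boot zify.

Set Implicit Arguments.
Unset Strict Implicit.
Unset Printing Implicit Defensive.

Section Nameless.
Variables (P : Type) (ar : P -> nat) (K : Type).
Local Notation fm := (form ar K).

(* Locally nameless forms: [DB i] refers to the [i]-th enclosing [DAll], [DV x]
   is a free variable. [db] also drops void quantifiers, so that variants have
   equal forms ([variant_dbE]) and the tableau's closure condition becomes equality. *)
Inductive dterm : Type := DV of nat | DB of nat | DC of K.
Inductive dform : Type :=
  | DAtom (p : P) of ('I_(ar p) -> dterm)
  | DNeg of dform | DBox of dform | DAll of dform | DImp of dform & dform.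

Fixpoint dmap (F : nat -> dterm -> dterm) (k : nat) (d : dform) : dform :=
  match d with
  | DAtom p a => DAtom (fun i => F k (a i))
  | DNeg e => DNeg (dmap F k e)
  | DBox e => DBox (dmap F k e)
  | DAll e => DAll (dmap F k.+1 e)
  | DImp e1 e2 => DImp (dmap F k e1) (dmap F k e2)
  end.

Fixpoint dall (Q : nat -> dterm -> Prop) (k : nat) (d : dform) : Prop :=
  match d with
  | DAtom p a => forall i, Q k (a i)
  | DNeg e => dall Q k e
  | DBox e => dall Q k e
  | DAll e => dall Q k.+1 e
  | DImp e1 e2 => dall Q k e1 /\ dall Q k e2
  end.

Fixpoint dex (Q : nat -> dterm -> Prop) (k : nat) (d : dform) : Prop :=
  match d with
  | DAtom p a => exists i, Q k (a i)
  | DNeg e => dex Q k e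
  | DBox e => dex Q k e
  | DAll e => dex Q k.+1 e
  | DImp e1 e2 => dex Q k e1 \/ dex Q k e2
  end.

Lemma dmap_comp F G k d : dmap F k (dmap G k d) = dmap (fun j t => F j (G j t)) k d.
Proof. elim: d k => [p a|e IH|e IH|e IH|e1 IH1 e2 IH2] k /=; by rewrite ?IH ?IH1 ?IH2. Qed.

Lemma dmap_ext F G k d : dall (fun j t => F j t = G j t) k d -> dmap F k d = dmap G k d.
Proof.
elim: d k => /= [p a|e IH|e IH|e IH|e1 IH1 e2 IH2] k H.
- f_equal; apply: functional_extensionality => i; exact: H.
- by rewrite IH. - by rewrite IH. - by rewrite IH.
- by case: H => ??; rewrite IH1 ?IH2.
Qed.

Lemma dmap_id F k d : dall (fun j t => F j t = t) k d -> dmap F k d = d.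
Proof.
elim: d k => /= [p a|e IH|e IH|e IH|e1 IH1 e2 IH2] k H.
- f_equal; apply: functional_extensionality => i; exact: H.
- by rewrite IH. - by rewrite IH. - by rewrite IH.
- by case: H => ??; rewrite IH1 ?IH2.
Qed.

Lemma dall_impl (Q R : nat -> dterm -> Prop) k d :
  (forall j t, Q j t -> R j t) -> dall Q k d -> dall R k d.
Proof.
move=> HQR; elim: d k => /= [p a|e IH|e IH|e IH|e1 IH1 e2 IH2] k H; auto.
by case: H; split; auto.
Qed.

Lemma dex_impl (Q R : nat -> dterm -> Prop) k d :
  (forall j t, Q j t -> R j t) -> dex Q k d -> dex R k d.
Proof.
move=> HQR; elim: d k => /= [p a|e IH|e IH|e IH|e1 IH1 e2 IH2] k H; auto.
- by case: H => i Hi; exists i; auto.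
- by case: H; auto.
Qed.

Lemma dall_true (Q : nat -> dterm -> Prop) k d : (forall j t, Q j t) -> dall Q k d.
Proof. move=> H; elim: d k => /= *; auto. Qed.

Lemma dall_dmap Q F k d : dall Q k (dmap F k d) <-> dall (fun j t => Q j (F j t)) k d.
Proof.
elim: d k => /= [p a|e IH|e IH|e IH|e1 IH1 e2 IH2] k; try tauto.
all: first [by rewrite IH | by rewrite IH1 IH2].
Qed.

Lemma dex_dmap Q F k d : dex Q k (dmap F k d) <-> dex (fun j t => Q j (F j t)) k d.
Proof.
elim: d k => /= [p a|e IH|e IH|e IH|e1 IH1 e2 IH2] k; try tauto.
all: first [by rewrite IH | by rewrite IH1 IH2].
Qed.

Lemma dex_witness Q k d : dex Q k d -> exists j t, Q j t.
Proof.
elim: d k => /= [p a|e IH|e IH|e IH|e1 IH1 e2 IH2] k; eauto.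
- by case=> i H; eauto.
- by case; eauto.
Qed.

Lemma not_dex Q k d : ~ dex Q k d -> dall (fun j t => ~ Q j t) k d.
Proof.
elim: d k => /= [p a|e IH|e IH|e IH|e1 IH1 e2 IH2] k H; eauto.
split; [apply: IH1|apply: IH2] => ?; apply: H; tauto.
Qed.

Definition depth_independent (F : nat -> dterm -> dterm) := forall j j' t, F j t = F j' t.

Lemma dmap_indep F k k' d : depth_independent F -> dmap F k d = dmap F k' d.
Proof.
move=> HF; elim: d k k' => /= [p a|e IH|e IH|e IH|e1 IH1 e2 IH2] k k'.
- f_equal; apply: functional_extensionality => i; exact: HF.
- by rewrite (IH _ k'). - by rewrite (IH _ k'). - by rewrite (IH _ k'.+1).
- by rewrite (IH1 _ k') (IH2 _ k').
Qed.

Lemma dex_indep Q k k' d : (forall j j' t, Q j t <-> Q j' t) -> (dex Q k d <-> dex Q k' d).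
Proof.
move=> HQ; elim: d k k' => /= [p a|e IH|e IH|e IH|e1 IH1 e2 IH2] k k'; auto.
- split; case=> i Hi; exists i; exact (proj1 (HQ _ _ _) Hi).
- by rewrite (IH1 _ k') (IH2 _ k').
Qed.

Definition closet (x : nat) (j : nat) (t : dterm) : dterm :=
  if t is DV y then (if y == x then DB j else t) else t.
Definition opent (c : K) (j : nat) (t : dterm) : dterm :=
  if t is DB i then (if i == j then DC c else t) else t.
Definition replt (x : nat) (u : dterm) (j : nat) (t : dterm) : dterm :=
  if t is DV y then (if y == x then u else t) else t.
Definition close (x : nat) (k : nat) (d : dform) : dform := dmap (closet x) k d.
Definition open (c : K) (k : nat) (d : dform) : dform := dmap (opent c) k d.
Definition repl (x : nat) (u : dterm) (d : dform) : dform := dmap (replt x u) 0 d.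
Definition dfree (y : nat) (d : dform) : Prop := dex (fun _ t => t = DV y) 0 d.
Definition lc_term (j : nat) (t : dterm) : Prop := if t is DB i then i < j else True.
Definition lc (d : dform) : Prop := dall lc_term 0 d.

Definition tm (t : term K) : dterm := match t with Var y => DV y | Con c => DC c end.
Definition is_var x (t : term K) : bool := match t with Var y => y == x | _ => false end.

Fixpoint freeb (x : nat) (f : fm) : bool :=
  match f with
  | Atom p ts => [exists i, is_var x (ts i)]
  | Neg g => freeb x g
  | Box g => freeb x g
  | All y g => (y != x) && freeb x g
  | Imp g h => freeb x g || freeb x h
  end.

Lemma freeP x f : free x f <-> freeb x f.
Proof.
elim: f => /= [p ts|g IH|g IH|y g IH|g IHg h IHh]; try tauto.
- split.
  + case=> i Hi; apply/existsP; exists i; by rewrite Hi /= eqxx.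
  + move/existsP=> [i]; case E: (ts i) => [z|c] //= /eqP <-; by exists i.
- rewrite IH; split.
  + by case=> /eqP -> ->.
  + by case/andP=> /eqP ? ->.
- rewrite IHg IHh; split; [by case=> ->; rewrite ?orbT|by case/orP; auto].
Qed.

Fixpoint db (f : fm) : dform :=
  match f with
  | Atom p ts => DAtom (fun i => tm (ts i))
  | Neg g => DNeg (db g)
  | Box g => DBox (db g)
  | All x g => if freeb x g then DAll (close x 0 (db g)) else db g
  | Imp g h => DImp (db g) (db h)
  end.

Fixpoint fsize (f : fm) : nat :=
  match f with
  | Atom _ _ => 1
  | Neg g => (fsize g).+1
  | Box g => (fsize g).+1
  | All _ g => (fsize g).+1
  | Imp g h => (fsize g + fsize h).+1
  end.

End Nameless.

Section NamelessForms.
Variables (P : Type) (ar : P -> nat) (K : Type).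
Local Notation fm := (form ar K).
Local Notation dfm := (dform ar K).

Lemma substf_ext (s s' : nat -> term K) (f : fm) :
  (forall z, free z f -> s z = s' z) -> substf s f = substf s' f.
Proof.
elim: f s s' => /= [p ts|g IH|g IH|y g IH|g IHg h IHh] s s' H.
- f_equal; apply: functional_extensionality => i.
  case E: (ts i) => [z|c] //; apply: H; by exists i.
- by rewrite (IH s s').
- by rewrite (IH s s').
- f_equal; apply: IH => z Hz; case: (z =P y) => [//|ne].
  apply: H; split => //; move=> E; apply: ne; by rewrite E.
- f_equal; [apply: IHg|apply: IHh] => z Hz; apply: H; tauto.
Qed.

Lemma substf_id (s : nat -> term K) (f : fm) :
  (forall z, free z f -> s z = Var K z) -> substf s f = f.
Proof.
elim: f s => /= [p ts|g IH|g IH|y g IH|g IHg h IHh] s H.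
- f_equal; apply: functional_extensionality => i.
  case E: (ts i) => [z|c] //; apply: H; by exists i.
- by rewrite IH.
- by rewrite IH.
- f_equal; apply: IH => z Hz; case: (z =P y) => [->//|ne].
  apply: H; split => //; move=> E; apply: ne; by rewrite E.
- by rewrite IHg ?IHh // => z Hz; apply: H; tauto.
Qed.

Lemma subst1_nofree (x : nat) (t : term K) (f : fm) : ~ free x f -> subst1 x t f = f.
Proof.
move=> Hx; apply: substf_id => z Hz; case: (z =P x) => // E; by subst.
Qed.

Lemma substf_size s (f : fm) : fsize (substf s f) = fsize f.
Proof. elim: f s => //= [g IH|g IH|y g IH|g IHg h IHh] s; by rewrite ?IH ?IHg ?IHh. Qed.

Lemma dall_shift Q k n (d : dfm) : dall Q (k + n) d <-> dall (fun j => Q (j + n)) k d.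
Proof.
elim: d k => /= [p a|e IH|e IH|e IH|e1 IH1 e2 IH2] k; try tauto.
- exact: IH. - exact: IH.
- by rewrite -IH addSn.
- by rewrite IH1 IH2.
Qed.

Lemma dfree_db (y : nat) (f : fm) : free y f <-> dfree y (db f).
Proof.
rewrite /dfree; elim: f => /= [p ts|g IH|g IH|x g IH|g IHg h IHh]; try tauto.
- split; case=> i Hi; exists i; first by rewrite Hi.
  by move: Hi; case: (ts i) => //= z [->].
- case Hb: (freeb x g).
  + rewrite /= (dex_indep 1 0) // /close dex_dmap IH; split.
    * case=> Hxy H; apply: dex_impl H => j t ->; rewrite /closet.
      by case: eqP => // E; case: Hxy.
    * move=> H; split.
      - move=> E; subst; have [j [t Ht]] := dex_witness H.
        move: Ht; rewrite /closet; case: t => //= z; by case: eqP => [_|ne] // [E].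
      - apply: dex_impl H => j t; rewrite /closet; case: t => //= z.
        by case: eqP.
  + rewrite -IH; split; first tauto.
    move=> H; split => // E; subst; move/freeP: H; by rewrite Hb.
Qed.

Lemma repl_nofree (x : nat) (u : dterm K) (d : dfm) : ~ dfree x d -> repl x u d = d.
Proof.
move=> H; apply: dmap_id; apply: dall_impl (not_dex H) => j t Ht.
case: t Ht => //= z; case: eqP => // -> H'; by case: H'.
Qed.

Lemma dfree_repl_ne (w x : nat) (u : dterm K) (d : dfm) :
  w <> x -> u <> DV K w -> (dfree w (repl x u d) <-> dfree w d).
Proof.
move=> Hwx Hu; rewrite /dfree /repl dex_dmap; split; apply: dex_impl => j t.
- case: t => //= z; case: eqP => // _ E; by case: Hu.
- move=> ->; rewrite /=; case: eqP => // E; by case: Hwx.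
Qed.

Lemma dfree_repl_hit (x y : nat) (d : dfm) : dfree x d -> dfree y (repl x (DV K y) d).
Proof.
rewrite /dfree /repl dex_dmap; apply: dex_impl => j t ->; by rewrite /= eqxx.
Qed.

Lemma closet_replt (w x : nat) (u : dterm K) j t : w <> x -> u <> DV K w ->
  closet w j (replt x u j t) = replt x u j (closet w j t).
Proof.
move=> Hwx Hu; case: t => //= y; case: (eqVneq y x) => [->|Hyx].
- have /negbTE -> : x != w by apply/eqP => E; case: Hwx.
  rewrite /= eqxx; case: u Hu => //= z Hz; by case: eqP => // E; subst.
- case: (eqVneq y w) => [->|Hyw] /=; first by rewrite eqxx.
  by rewrite (negbTE Hyx) (negbTE Hyw).
Qed.

Lemma db_subst1 (x : nat) (t : term K) (f : fm) :
  (forall z, t = Var K z -> free_for z x f) -> db (subst1 x t f) = repl x (tm t) (db f).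
Proof.
elim: f => [p ts|g IH|g IH|w g IH|g IHg h IHh] Ht.
- rewrite /subst1 /repl /=; f_equal; apply: functional_extensionality => i.
  case: (ts i) => //= y; by case: (y == x).
- rewrite /= IH //.
- rewrite /= IH //.
- case: (classic (free x (All w g))) => Hx.
  + have Hwx : w <> x by case: Hx.
    have E : subst1 x t (All w g) = All w (subst1 x t g).
      rewrite /subst1 /=; f_equal; apply: substf_ext => z _.
      case: (z =P w) => // ->; case: eqP => // E; by case: Hwx.
    have Ht' : forall z, t = Var K z -> w <> z /\ free_for z x g.
      move=> z Hz; case: (Ht z Hz) => //.
    rewrite E /= IH; last by move=> z Hz; case: (Ht' z Hz).
    have Htm : tm t <> DV K w.
      case: t Ht Ht' {E IH} => //= z _ H' [E]; subst; by case: (H' w erefl).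
    have -> : freeb w (subst1 x t g) = freeb w g.
      apply/idP/idP => /freeP H; apply/freeP; move: H; rewrite !dfree_db IH;
      try (by move=> z Hz; case: (Ht' z Hz));
      rewrite dfree_repl_ne //.
    case: (freeb w g) => //.
    rewrite /repl /close /= (dmap_indep 1 0) // !dmap_comp.
    by f_equal; apply: dmap_ext; apply: dall_true => j u; exact: closet_replt.
  + rewrite subst1_nofree // repl_nofree //; by rewrite -dfree_db.
- rewrite /= IHg ?IHh // => z Hz; by case: (Ht z Hz).
Qed.

Lemma lc_db (f : fm) : lc (db f).
Proof.
rewrite /lc; elim: f => /= [p ts|g IH|g IH|x g IH|g IHg h IHh]; try tauto.
- by move=> i; case: (ts i).
- case: (freeb x g) => //=; rewrite -[1]/(0 + 1) dall_shift dall_dmap.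
  apply: dall_impl IH => j t; case: t => //= [y _|i Hi].
  + by case: eqP => //= _; rewrite addn1.
  + rewrite addn1; exact: ltnW.
Qed.

Lemma open_close (x : nat) (c : K) (d : dfm) : lc d -> open c 0 (close x 0 d) = repl x (DC c) d.
Proof.
move=> H; rewrite /open /close /repl dmap_comp; apply: dmap_ext.
apply: dall_impl H => j t; case: t => //= [y _|i Hi].
- by case: eqP => //= _; rewrite eqxx.
- by case: eqP => // E; subst; rewrite ltnn in Hi.
Qed.

Lemma close_repl (y x : nat) (d : dfm) : ~ dfree y d -> close y 0 (repl x (DV K y) d) = close x 0 d.
Proof.
move=> H; rewrite /close /repl dmap_comp; apply: dmap_ext.
apply: dall_impl (not_dex H) => j t; case: t => //= z Hz.
case: (z =P x) => [_|_] /=; first by rewrite eqxx.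
by case: eqP => // E; subst; case: Hz.
Qed.

Lemma closet_inj (z k : nat) (t1 t2 : dterm K) :
  lc_term k t1 -> lc_term k t2 -> closet z k t1 = closet z k t2 -> t1 = t2.
Proof.
rewrite /closet /lc_term.
case: t1 => [y1|i1|c1]; case: t2 => [y2|i2|c2] //= H1 H2.
- case: (eqVneq y1 z) => [->|n1]; case: (eqVneq y2 z) => [->|n2];
    rewrite ?eqxx ?(negbTE n1) ?(negbTE n2) //; congruence.
- case: (eqVneq y1 z) => [->|n1]; rewrite ?eqxx ?(negbTE n1) // => -[E]; subst.
  by rewrite ltnn in H2.
- case: (eqVneq y1 z) => [->|n1]; rewrite ?eqxx ?(negbTE n1) //.
- case: (eqVneq y2 z) => [->|n2]; rewrite ?eqxx ?(negbTE n2) // => -[E]; subst.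
  by rewrite ltnn in H1.
- case: (eqVneq y2 z) => [->|n2]; rewrite ?eqxx ?(negbTE n2) //.
Qed.

Lemma close_inj (z : nat) (d1 d2 : dfm) : lc d1 -> lc d2 -> close z 0 d1 = close z 0 d2 -> d1 = d2.
Proof.
rewrite /lc /close; move: 0 => k.
elim: d1 d2 k => [p a|e IH|e IH|e IH|e1 IH1 e2 IH2] [q b|e'|e'|e'|e1' e2'] k /= H1 H2 E;
  try discriminate E.
- injection E => Ea Ep; subst q; have Ea' := inj_pair2 _ _ _ _ _ Ea.
  f_equal; apply: functional_extensionality => i.
  apply: (closet_inj (H1 i) (H2 i)); exact: (congr1 (fun h => h i) Ea').
- case: E => E; by rewrite (IH e' k).
- case: E => E; by rewrite (IH e' k).
- case: E => E; by rewrite (IH e' k.+1).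
- case: E => E1' E2'; case: H1 => H11 H12; case: H2 => H21 H22.
  rewrite (IH1 e1' k H11 H21 E1'); by rewrite (IH2 e2' k H12 H22 E2').
Qed.

Lemma db_void (x : nat) (f : fm) : ~ free x f -> db (All x f) = db f.
Proof. by move=> Hx /=; have -> : freeb x f = false by apply/negP => /freeP. Qed.

Lemma variant_db (f g : fm) : variant f g -> db f = db g.
Proof.
induction 1 as [f|f g H IH|f g h H1 IH1 H2 IH2|x f Hx|x y f Hy Hff
  |f g H IH|f g H IH|x f g H IH|f f' g g' H1 IH1 H2 IH2].
- done.
- by rewrite IH.
- by rewrite IH1 IH2.
- exact: db_void.
- case: (classic (free x f)) => Hx.
  + rewrite /= db_subst1; last by move=> z [<-].
    have -> : freeb x f by apply/freeP.
    have -> : freeb y (subst1 x (Var K y) f).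
      apply/freeP; rewrite dfree_db db_subst1; last by move=> z [<-].
      apply: dfree_repl_hit; by rewrite -dfree_db.
    rewrite /= close_repl //; by rewrite -dfree_db.
  + by rewrite subst1_nofree // !db_void.
- by rewrite /= IH.
- by rewrite /= IH.
- have Hb : freeb x f = freeb x g.
    apply/idP/idP => /freeP Hf; apply/freeP; move: Hf; by rewrite !dfree_db IH.
  by rewrite /= Hb IH.
- by rewrite /= IH1 IH2.
Qed.


Fixpoint vmax (f : fm) : nat :=
  match f with
  | Atom p ts => \max_(i < ar p) (match ts i with Var y => y | Con _ => 0 end)
  | Neg g => vmax g
  | Box g => vmax g
  | All y g => maxn y (vmax g)
  | Imp g h => maxn (vmax g) (vmax h)
  end.

Lemma free_vmax (z : nat) (f : fm) : free z f -> z <= vmax f.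
Proof.
elim: f => /= [p ts|g IH|g IH|y g IH|g IHg h IHh].
- case=> i Hi; have := leq_bigmax (F := fun i => match ts i with Var y => y | Con _ => 0 end) i.
  by rewrite Hi.
- exact: IH.
- exact: IH.
- case=> _ /IH H; exact: (leq_trans H (leq_maxr _ _)).
- case=> [/IHg H|/IHh H]; [exact: (leq_trans H (leq_maxl _ _))|exact: (leq_trans H (leq_maxr _ _))].
Qed.

Lemma free_for_vmax (z x : nat) (f : fm) : vmax f < z -> free_for z x f.
Proof.
elim: f => /= [p ts|g IH|g IH|y g IH|g IHg h IHh] H //.
- exact: IH.
- exact: IH.
- right; split.
  + move=> E; subst; move: H; rewrite gtn_max ltnn; done.
  + apply: IH; move: H; rewrite gtn_max; by case/andP.
- move: H; rewrite gtn_max => /andP [H1 H2]; split; [exact: IHg|exact: IHh].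
Qed.

Lemma variant_rename_fresh (z x : nat) (f : fm) : vmax f < z ->
  variant (All x f) (All z (subst1 x (Var K z) f))
  /\ close z 0 (db (subst1 x (Var K z) f)) = close x 0 (db f).
Proof.
move=> Hz; have Hnf : ~ free z f by move/free_vmax; rewrite leqNgt Hz.
split; first exact: var_rename Hnf (free_for_vmax x Hz).
rewrite db_subst1 ?close_repl -?dfree_db //.
by move=> z' [<-]; apply: free_for_vmax.
Qed.

Lemma fsize_pos (f : fm) : 0 < fsize f.
Proof. by case: f. Qed.

Lemma tm_inj (t1 t2 : term K) : tm t1 = tm t2 -> t1 = t2.
Proof. by case: t1; case: t2 => //= ? ? [->]. Qed.

Lemma db_variant_size n (f g : fm) : fsize f + fsize g <= n -> db f = db g -> variant f g.
Proof.
elim: n f g => [|n IHn] f g Hs E; first by have := fsize_pos f; lia.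
case: (classic (exists x f1, f = All x f1 /\ ~ free x f1)) => [[x [f1 [Ef Hx]]]|Hf].
  subst f; apply: var_trans (var_void Hx) (IHn _ _ _ _); last by rewrite -E db_void.
  by move: Hs => /=; lia.
case: (classic (exists y g1, g = All y g1 /\ ~ free y g1)) => [[y [g1 [Eg Hy]]]|Hg].
  subst g; apply: var_trans (IHn _ _ _ _) (var_sym (var_void Hy)); last by rewrite E db_void.
  by move: Hs => /=; lia.
have Hf' : forall x f1, f = All x f1 -> freeb x f1.
  move=> x f1 Ef; apply/freeP; apply: NNPP => H; apply: Hf; by exists x, f1.
have Hg' : forall y g1, g = All y g1 -> freeb y g1.
  move=> y g1 Eg; apply/freeP; apply: NNPP => H; apply: Hg; by exists y, g1.
clear Hf Hg.
case: f Hf' Hs E => [p ts|f1|f1|x f1|f1 f2] Hf';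
  case: g Hg' => [q us|g1|g1|y g1|g1 g2] Hg' Hs /=;
  rewrite ?(Hf' _ _ erefl) ?(Hg' _ _ erefl) => E; try discriminate E.
- injection E => Ea Ep; subst q; have Ea' := inj_pair2 _ _ _ _ _ Ea.
  have -> : ts = us.
    apply: functional_extensionality => i; apply: tm_inj.
    exact: (congr1 (fun h => h i) Ea').
  exact: var_refl.
- case: E => E; apply: var_neg; apply: IHn => //; move: Hs => /=; lia.
- case: E => E; apply: var_box; apply: IHn => //; move: Hs => /=; lia.
- case: E => E.
  set z := (maxn (vmax f1) (vmax g1)).+1.
  have [Rf Cf] := @variant_rename_fresh z x f1 ltac:(by rewrite ltnS leq_maxl).
  have [Rg Cg] := @variant_rename_fresh z y g1 ltac:(by rewrite ltnS leq_maxr).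
  have Ez : db (subst1 x (Var K z) f1) = db (subst1 y (Var K z) g1).
    by apply: (close_inj (z := z)); rewrite ?Cf ?Cg //; exact: lc_db.
  apply: var_trans Rf (var_trans (var_all _ _) (var_sym Rg)).
  apply: IHn Ez; rewrite /subst1 !substf_size; move: Hs => /=; lia.
- case: E => E1 E2; apply: var_imp; apply: IHn => //; move: Hs => /=; lia.
Qed.

Lemma variant_dbE (f g : fm) : variant f g <-> db f = db g.
Proof. split; [exact: variant_db|exact: db_variant_size (leqnn _)]. Qed.

End NamelessForms.

Lemma In_mem (T : eqType) (x : T) (s : seq T) : x \in s -> In x s.
Proof. elim: s => //= y s IH; rewrite in_cons; case/orP => [/eqP ->|/IH]; auto. Qed.

Section ConstantRenaming.
Variables (P : Type) (ar : P -> nat).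

Definition tmapK (K K' : Type) (h : K -> K') (t : term K) : term K' :=
  match t with Var y => Var K' y | Con c => Con (h c) end.

Fixpoint dmapK (K K' : Type) (h : K -> K') (d : dform ar K) : dform ar K' :=
  match d with
  | DAtom p a =>
      DAtom (fun i => match a i with DV y => DV K' y | DB j => DB K' j | DC c => DC (h c) end)
  | DNeg e => DNeg (dmapK h e)
  | DBox e => DBox (dmapK h e)
  | DAll e => DAll (dmapK h e)
  | DImp e1 e2 => DImp (dmapK h e1) (dmapK h e2)
  end.

Lemma free_mapK K K' (h : K -> K') x (f : form ar K) : free x (mapK h f) <-> free x f.
Proof.
elim: f => /= [p ts|g IH|g IH|y g IH|g IHg h' IHh]; try tauto.
split; case=> i Hi; exists i; move: Hi; by case: (ts i) => //= z [->].
Qed.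

Lemma closed_mapK K K' (h : K -> K') (f : form ar K) : is_closed f -> is_closed (mapK h f).
Proof. move=> H x; rewrite free_mapK; exact: H. Qed.

Lemma mapK_substf K K' (h : K -> K') s (f : form ar K) :
  mapK h (substf s f) = substf (fun z => tmapK h (s z)) (mapK h f).
Proof.
elim: f s => /= [p ts|g IH|g IH|y g IH|g IHg h' IHh] s.
- f_equal; apply: functional_extensionality => i; case: (ts i) => //= z; by case: (s z).
- by rewrite IH.
- by rewrite IH.
- rewrite IH; f_equal; f_equal; apply: functional_extensionality => z; by case: (z == y).
- by rewrite IHg IHh.
Qed.

Lemma mapK_subst1 K K' (h : K -> K') x (c : K) (f : form ar K) :
  mapK h (subst1 x (Con c) f) = subst1 x (Con (h c)) (mapK h f).
Proof.
rewrite /subst1 mapK_substf; f_equal; apply: functional_extensionality => z; by case: (z == x).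
Qed.

Lemma dmapK_close K K' (h : K -> K') x k (d : dform ar K) :
  dmapK h (close x k d) = close x k (dmapK h d).
Proof.
rewrite /close; elim: d k => /= [p a|e IH|e IH|e IH|e1 IH1 e2 IH2] k; try by rewrite ?IH ?IH1 ?IH2.
f_equal; apply: functional_extensionality => i; case: (a i) => //= y; by case: (y == x).
Qed.

Lemma db_mapK K K' (h : K -> K') (f : form ar K) : db (mapK h f) = dmapK h (db f).
Proof.
elim: f => [p ts|g IH|g IH|y g IH|g IHg h' IHh].
- rewrite /=; f_equal; apply: functional_extensionality => i; by case: (ts i).
- by rewrite /= IH.
- by rewrite /= IH.
- have E : freeb y (mapK h g) = freeb y g.
    by apply/idP/idP => /freeP H; apply/freeP; move: H; rewrite free_mapK.
  rewrite /= E; case: (freeb y g) => /=; by rewrite IH ?dmapK_close.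
- by rewrite /= IHg IHh.
Qed.

Lemma variant_mapK K K' (h : K -> K') (f g : form ar K) :
  variant f g -> db (mapK h f) = db (mapK h g).
Proof. move/variant_db => E; by rewrite !db_mapK E. Qed.

Lemma mapK_comp K1 K2 K3 (h1 : K2 -> K3) (h2 : K1 -> K2) (f : form ar K1) :
  mapK h1 (mapK h2 f) = mapK (fun c => h1 (h2 c)) f.
Proof.
elim: f => /= [p ts|g IH|g IH|y g IH|g IHg h' IHh]; try by rewrite ?IH ?IHg ?IHh.
f_equal; apply: functional_extensionality => i; by case: (ts i).
Qed.

Lemma mapK_ext_occ K K' (h h' : K -> K') (f : form ar K) :
  (forall c, occurs c f -> h c = h' c) -> mapK h f = mapK h' f.
Proof.
elim: f => [p ts|g IH|g IH|y g IH|g IHg h2 IHh] H.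
- rewrite /=; f_equal; apply: functional_extensionality => i; case E: (ts i) => //=.
  rewrite H //; by exists i.
- by rewrite /= IH.
- by rewrite /= IH.
- by rewrite /= IH.
- rewrite /= IHg ?IHh // => c Hc; apply: H; rewrite /=; tauto.
Qed.

Lemma inst_closed K (s : nat -> K) (f : form ar K) : is_closed f -> inst s f = f.
Proof. move=> H; apply: substf_id => z Hz; by case: (H z). Qed.

Lemma occurs_substf K (c : K) (s : nat -> term K) (g : form ar K) :
  (exists z, free z g /\ s z = Con c) -> occurs c (substf s g).
Proof.
elim: g s => /= [p ts|g IH|g IH|y g IH|g IHg h IHh] s [z [Hz Hs]].
- case: Hz => i Hi; exists i; by rewrite Hi.
- apply: IH; by exists z.
- apply: IH; by exists z.
- apply: IH; exists z; case: Hz => Hyz Hz; split => //.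
  case: eqP => // E; by case: Hyz.
- case: Hz => Hz; [left; apply: IHg|right; apply: IHh]; by exists z.
Qed.

Lemma occurs_subst1 K (c : K) y (g : form ar K) : free y g -> occurs c (subst1 y (Con c) g).
Proof. move=> H; apply: occurs_substf; exists y; by rewrite eqxx. Qed.

Lemma occurs_mapK K K' (h : K -> K') c (f : form ar K) :
  occurs c f -> occurs (h c) (mapK h f).
Proof.
elim: f => /= [p ts|g IH|g IH|y g IH|g IHg h' IHh]; try tauto.
case=> i Hi; exists i; by rewrite Hi.
Qed.

Fixpoint consts K (f : form ar K) : seq K :=
  match f with
  | Atom p ts =>
      flat_map (fun i => match ts i with Con c => [:: c] | _ => [::] end) (enum 'I_(ar p))
  | Neg g => consts g
  | Box g => consts g
  | All _ g => consts g
  | Imp g h => consts g ++ consts h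
  end.

Lemma constsP K (c : K) (f : form ar K) : occurs c f <-> In c (consts f).
Proof.
elim: f => /= [p ts|g IH|g IH|y g IH|g IHg h IHh] //.
- rewrite in_flat_map; split.
  + case=> i Hi; exists i; split; first by apply: In_mem; rewrite mem_enum.
    by rewrite Hi /=; left.
  + case=> i [_]; case E: (ts i) => //= [c'] [<-|//]; by exists i.
- by rewrite in_app_iff IHg IHh.
Qed.

End ConstantRenaming.

Section SystematicTableau.
Variables (P : Type) (ar : P -> nat) (C : Type).
Local Notation br := (branch ar C).

(* Illegal applications, and applications all of whose alternatives close,
   leave the branch unchanged; this keeps the construction below total. *)
Definition pick_open (B : br) (alts : seq br) : br :=
  match excluded_middle_informative (step B alts /\ exists B', In B' alts /\ ~ closable B') with
  | left H => proj1_sig (constructive_indefinite_description _ (proj2 H))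
  | right _ => B
  end.

Definition log_witnessed (B : br) : Prop :=
  forall L x g c, In (L, All x g, c) (qlog B) -> In (L, inst1 x g c) (sfs B).

Definition extends (B B' : br) : Prop :=
  exists l lg, sfs B' = l ++ sfs B /\ qlog B' = lg ++ qlog B.

Definition grows (B B' : br) : Prop :=
  extends B B' /\ (~ closable B -> ~ closable B') /\ (log_witnessed B -> log_witnessed B').

Lemma grows_refl B : grows B B.
Proof. split; [by exists [::], [::]|tauto]. Qed.

Lemma grows_trans B1 B2 B3 : grows B1 B2 -> grows B2 B3 -> grows B1 B3.
Proof.
case=> [[l1 [lg1 [E1 F1]]] [H1 I1]] [[l2 [lg2 [E2 F2]]] [H2 I2]]; split; last tauto.
exists (l2 ++ l1), (lg2 ++ lg1); by rewrite E2 E1 F2 F1 !catA.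
Qed.

Lemma grows_In B B' s : grows B B' -> In s (sfs B) -> In s (sfs B').
Proof. case=> -[l [lg [-> _]]] _ H; apply: in_or_app; by right. Qed.

Lemma grows_qlog B B' e : grows B B' -> In e (qlog B) -> In e (qlog B').
Proof. case=> -[l [lg [_ ->]]] _ H; apply: in_or_app; by right. Qed.

Lemma grows_open B B' : grows B B' -> ~ closable B -> ~ closable B'.
Proof. by case=> _ []. Qed.

Lemma grows_log_witnessed B B' : grows B B' -> log_witnessed B -> log_witnessed B'.
Proof. by case=> _ []. Qed.

Lemma ext_log_witnessed B l lg : log_witnessed B ->
  (forall L x g c, In (L, All x g, c) lg -> In (L, inst1 x g c) l) ->
  log_witnessed (ext B l lg).
Proof.
move=> HB Hl L x g c H; case: (in_app_or _ _ _ H) => H'; apply: in_or_app;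
  [left; exact: Hl|right; exact: HB].
Qed.

Lemma step_alternative B alts B' : step B alts -> In B' alts ->
  (exists l lg, B' = ext B l lg) /\ (log_witnessed B -> log_witnessed B').
Proof.
case=> [[s [A [_ [_ ->]]]] | Hq] Hin.
- move: Hin; rewrite in_map_iff => -[l [<- _]]; split; first by exists l, [::].
  move=> HB; exact: ext_log_witnessed.
- case: Hq Hin => /=; intros;
  repeat match goal with H : _ \/ _ |- _ => destruct H | H : False |- _ => destruct H end;
  subst; (split; [eexists _, _; reflexivity|]);
  move=> HB; apply: ext_log_witnessed => // L1 x1 g1 c1 /=; intuition;
  match goal with H : (_, _, _) = (_, _, _) |- _ => injection H; intros; subst end; simpl; tauto.
Qed.

Lemma grows_pick_open B alts : grows B (pick_open B alts).
Proof.
rewrite /pick_open; case: excluded_middle_informative => [H|_]; last exact: grows_refl.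
case: (constructive_indefinite_description _ _) => B' [Hin Hnc] /=.
have [[l [lg EB]] HLI] := step_alternative (proj1 H) Hin; subst B'.
by split; [exists l, lg|split].
Qed.

Lemma pick_open_In B alts : ~ closable B -> step B alts -> In (pick_open B alts) alts.
Proof.
move=> Hnc Hs; rewrite /pick_open; case: excluded_middle_informative => [H|H].
- exact: (proj1 (proj2_sig (constructive_indefinite_description
                             (fun B' : br => In B' alts /\ ~ closable B') (proj2 H)))).
- exfalso; apply: H; split => //; apply: NNPP => H; apply: Hnc.
  apply: (cl_step Hs) => B' Hin; apply: NNPP => H'; apply: H; by exists B'.
Qed.

Lemma grows_fold (A : Type) (f : br -> A -> br) (l : seq A) B :
  (forall B a, grows B (f B a)) -> grows B (fold_left f l B).
Proof.
move=> Hf; elim: l B => [|a l IH] B /=; first exact: grows_refl.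
exact: grows_trans (Hf B a) (IH _).
Qed.

Lemma grows_fold_In (A : Type) (f : br -> A -> br) (l : seq A) B a :
  (forall B a, grows B (f B a)) -> In a l ->
  exists B', grows B B' /\ grows (f B' a) (fold_left f l B).
Proof.
move=> Hf; elim: l B => [|b l IH] B //= [E|H].
- subst; exists B; split; [exact: grows_refl|exact: grows_fold].
- have [B' [H1 H2]] := IH (f B b) H; exists B'; split => //; exact: grows_trans (Hf B b) H1.
Qed.

Definition bconsts (B : br) : seq (TK C) := flat_map (fun s => consts s.2) (sfs B).
Definition natc (k : TK C) : nat := match k with inr n => n | inl _ => 0 end.
Definition fresh (B : br) : TK C := inr (foldr maxn 0 (map natc (bconsts B))).+1.

Lemma foldr_maxn_ub (l : seq nat) n : In n l -> n <= foldr maxn 0 l.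
Proof.
elim: l => //= a l IH [->|H]; first exact: leq_maxl.
exact: leq_trans (IH H) (leq_maxr _ _).
Qed.

Lemma newc_fresh B : newc (fresh B) B.
Proof.
move=> s Hs /constsP Hc.
have : In (fresh B) (bconsts B) by rewrite /bconsts in_flat_map; exists s.
by move/(in_map natc)/foldr_maxn_ub; rewrite /fresh /= ltnn.
Qed.

Definition candidates (m : nat) (B : br) : seq (TK C) := bconsts B ++ map inr (List.seq 0 m).

Definition reuse_labels (L : V4) : seq V4 := if L is Vf then [:: Vf; VT; Vt] else [:: Vt; VT].

Lemma label_cases L : L = VT \/ (L = Vt \/ L = Vf) \/ L = VF.
Proof. by case: L; tauto. Qed.

Definition partial_alts (B : br) L x g c c' : seq br :=
  [seq ext B [:: (L, inst1 x g c); (L', inst1 x g c')] [:: (L, All x g, c)] | L' <- reuse_labels L].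

Definition reuse_alts (B : br) L x g c : seq br :=
  [seq ext B [:: (L', inst1 x g c)] [::] | L' <- reuse_labels L].

Lemma step_partial B L x g c c' : L = Vt \/ L = Vf ->
  In (L, All x g) (sfs B) -> newc c B -> c' <> c -> step B (partial_alts B L x g c c').
Proof. by move=> HL Hin Hc Hc'; right; case: HL Hin => -> Hin; constructor. Qed.

Lemma step_reuse B L x g c c'' : L = Vt \/ L = Vf ->
  In (L, All x g, c) (qlog B) -> c'' <> c -> step B (reuse_alts B L x g c'').
Proof. by move=> HL Hin Hc; right; case: HL Hin => -> Hin; econstructor; eauto. Qed.

(* [inr 0] may serve as the second instance of the first [t]/[f] step since it
   differs from the fresh constant. *)
Definition expand (m : nat) (s : sform ar C) (B : br) : br :=
  match s with
  | (VT, All x g) =>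
      fold_left (fun B' c => pick_open B' [:: ext B' [:: (VT, inst1 x g c)] [::]])
        (candidates m B) B
  | (VF, All x g) =>
      pick_open B [:: ext B [:: (VF, inst1 x g (fresh B))] [:: (VF, All x g, fresh B)]]
  | (L, All x g) =>
      let B1 := pick_open B (partial_alts B L x g (fresh B) (inr 0)) in
      fold_left (fun B' c => pick_open B' (reuse_alts B' L x g c)) (candidates m B1) B1
  | _ => if prule s is Some A then pick_open B [seq ext B l [::] | l <- A] else B
  end.

Lemma grows_expand m s B : grows B (expand m s B).
Proof.
case: s => [[] [p ts|g|g|x g|g h]] /=; try exact: grows_pick_open; try exact: grows_refl;
  try (apply: grows_fold => ? ?; exact: grows_pick_open);
  (apply: grows_trans (grows_pick_open _ _) _; apply: grows_fold => ? ?; exact: grows_pick_open).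
Qed.

Lemma expand_prule m s A B : prule s = Some A ->
  expand m s B = pick_open B [seq ext B l [::] | l <- A].
Proof. by case: s => [[] [p ts|g|g|x g|g h]] //= [<-]. Qed.

(* Positions are counted from the root, so they stay valid as the branch grows. *)
Definition expand_nth (m : nat) (B : br) (j : nat) : br :=
  if nth_error (List.rev (sfs B)) j is Some s then expand m s B else B.

Definition expand_round (m : nat) (B : br) : br := fold_left (expand_nth m) (List.seq 0 m.+1) B.

Lemma grows_expand_nth m B j : grows B (expand_nth m B j).
Proof. rewrite /expand_nth; case: nth_error => [s|]; [exact: grows_expand|exact: grows_refl]. Qed.

Lemma grows_expand_round m B : grows B (expand_round m B).
Proof. apply: grows_fold => ? ?; exact: grows_expand_nth. Qed.

Lemma grows_nth_error B B' j s : grows B B' ->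
  nth_error (List.rev (sfs B)) j = Some s -> nth_error (List.rev (sfs B')) j = Some s.
Proof.
case=> -[l [lg [-> _]]] _ H; rewrite rev_app_distr nth_error_app1 //.
apply/nth_error_Some; by rewrite H.
Qed.

Lemma In_nth_error_rev (B : br) s :
  In s (sfs B) -> exists j, nth_error (List.rev (sfs B)) j = Some s.
Proof. move=> H; apply: In_nth_error; by rewrite -in_rev. Qed.

Lemma nth_error_rev_In (B : br) j s : nth_error (List.rev (sfs B)) j = Some s -> In s (sfs B).
Proof. move=> H; have := nth_error_In _ _ H; by rewrite -in_rev. Qed.

End SystematicTableau.

Section Limit.
Variables (P : Type) (ar : P -> nat) (C : Type).
Local Notation br := (branch ar C).
Local Notation tf := (form ar (TK C)).
Variables (root : br) (root_open : ~ closable root) (root_log : log_witnessed root).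

Fixpoint stage (m : nat) : br :=
  if m is m'.+1 then expand_round m' (stage m') else root.

Lemma grows_stage m m' : m <= m' -> grows (stage m) (stage m').
Proof.
move/subnKC <-; elim: (m' - m) => [|k IH]; first by rewrite addn0; exact: grows_refl.
rewrite addnS /=; exact: grows_trans IH (grows_expand_round _ _).
Qed.

Lemma stage_open m : ~ closable (stage m) /\ log_witnessed (stage m).
Proof.
have H := grows_stage (leq0n m).
split; [exact: grows_open H root_open|exact: grows_log_witnessed H root_log].
Qed.

Definition in_limit (s : sform ar C) : Prop := exists m, In s (sfs (stage m)).

Lemma in_limit_of (B : br) m s : grows B (stage m) -> In s (sfs B) -> in_limit s.
Proof. move=> HR Hs; exists m; exact: grows_In HR Hs. Qed.

Lemma expanded_eventually s m0 : In s (sfs (stage m0)) ->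
  exists j, forall m, m0 <= m -> j <= m ->
  exists B, grows (stage m) B /\ ~ closable B /\ log_witnessed B /\ In s (sfs B)
            /\ grows (expand m s B) (stage m.+1).
Proof.
move=> Hin; have [j Hj] := In_nth_error_rev Hin; exists j => m H1 H2.
have Hjm : In j (List.seq 0 m.+1) by rewrite in_seq; lia.
have [B [RB RF]] := grows_fold_In (f := expand_nth m) (stage m)
  (fun B a => grows_expand_nth m B a) Hjm.
have Hn : nth_error (List.rev (sfs B)) j = Some s.
  exact: grows_nth_error (grows_trans (grows_stage H1) RB) Hj.
have [Hnc Hlog] := stage_open m.
exists B; split => //; split; first exact: grows_open RB Hnc.
split; first exact: grows_log_witnessed RB Hlog.
split; first exact: nth_error_rev_In Hn.
by move: RF; rewrite /expand_nth Hn.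
Qed.

(* The domain of the counter-model: old constants occurring in the limit, and
   all new constants (each is eventually a candidate). *)
Definition relevant (c : TK C) : Prop :=
  if c is inl _ then exists s, in_limit s /\ occurs c s.2 else True.

Lemma relevant_inr n : relevant (inr n).
Proof. by []. Qed.

Lemma relevant_candidate c : relevant c ->
  exists M, forall m (B : br), M <= m -> grows (stage m) B -> In c (candidates m B).
Proof.
case: c => [c0|n] /=.
- case=> s [[m2 Hs] Ho]; exists m2 => m B Hm HR; apply: in_or_app; left.
  rewrite /bconsts in_flat_map; exists s; split; last by apply/constsP.
  exact: grows_In (grows_trans (grows_stage Hm) HR) Hs.
- move=> _; exists n.+1 => m B Hm _; apply: in_or_app; right.
  apply: in_map; rewrite in_seq; lia.
Qed.

Lemma in_limit_prule s A : in_limit s -> prule s = Some A ->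
  exists l, In l A /\ forall s', In s' l -> in_limit s'.
Proof.
case=> m0 Hin EA; have [j Hj] := expanded_eventually Hin.
have [B [_ [Hnc [_ [Hs R2]]]]] := Hj (maxn m0 j) (leq_maxl _ _) (leq_maxr _ _).
move: R2; rewrite (expand_prule _ _ EA) => R2.
have Hst : step B [seq ext B l [::] | l <- A] by left; exists s, A.
have := pick_open_In Hnc Hst; rewrite in_map_iff => -[l [El Hl]].
exists l; split => // s' Hs'; apply: (in_limit_of R2); rewrite -El /=; apply: in_or_app; by left.
Qed.

Lemma in_limit_Tall x g c : in_limit (VT, All x g) -> relevant c -> in_limit (VT, inst1 x g c).
Proof.
case=> m0 Hin Hc; have [j Hj] := expanded_eventually Hin; have [M HM] := relevant_candidate Hc.
set m := maxn (maxn m0 j) M.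
have [B [R1 [Hnc [_ [Hs R2]]]]] := Hj m ltac:(rewrite /m; lia) ltac:(rewrite /m; lia).
have Hcm : In c (candidates m B) by apply: HM R1; rewrite /m; lia.
have [B' [R3 R4]] := grows_fold_In
  (f := fun B' c => pick_open B' [:: ext B' [:: (VT, inst1 x g c)] [::]]) B
  (fun B a => grows_pick_open _ _) Hcm.
have Hst : step B' [:: ext B' [:: (VT, inst1 x g c)] [::]].
  by right; apply: q_Tall; exact: grows_In R3 Hs.
have := pick_open_In (grows_open R3 Hnc) Hst => /= -[E|//].
apply: (in_limit_of (m := m.+1) (grows_trans R4 R2)); rewrite -E /=; by left.
Qed.

Lemma in_limit_Fall x g : in_limit (VF, All x g) -> exists c, in_limit (VF, inst1 x g c).
Proof.
case=> m0 Hin; have [j Hj] := expanded_eventually Hin.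
have [B [_ [Hnc [Hlog [Hs R2]]]]] := Hj (maxn m0 j) (leq_maxl _ _) (leq_maxr _ _).
case: (classic (exists c0, In (VF, All x g, c0) (qlog B))) => [[c0 Hc0]|Hno].
  exists c0; apply: (in_limit_of (grows_trans (grows_expand _ _ _) R2)); exact: Hlog.
have Hst : step B [:: ext B [:: (VF, inst1 x g (fresh B))] [:: (VF, All x g, fresh B)]].
  right; apply: q_Fall => //; [exact: newc_fresh|move=> c0 Hc0; apply: Hno; by exists c0].
have := pick_open_In Hnc Hst => /= -[E|//].
exists (fresh B); apply: (in_limit_of R2); rewrite /= -E /=; by left.
Qed.

Lemma in_limit_partial_all L x g : L = Vt \/ L = Vf -> in_limit (L, All x g) ->
  exists c, in_limit (L, inst1 x g c) /\
  forall c'', relevant c'' -> c'' <> c ->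
    exists L', In L' (reuse_labels L) /\ in_limit (L', inst1 x g c'').
Proof.
move=> HL [m0 Hin]; have [j Hj] := expanded_eventually Hin.
have Hexp B m : expand m (L, All x g) B =
    let B1 := pick_open B (partial_alts B L x g (fresh B) (inr 0)) in
    fold_left (fun B' c => pick_open B' (reuse_alts B' L x g c)) (candidates m B1) B1.
  by case: HL => ->.
have Hfold B1 m : grows B1 (fold_left (fun B' c => pick_open B' (reuse_alts B' L x g c))
                                    (candidates m B1) B1).
  by apply: grows_fold => ? ?; exact: grows_pick_open.
set m1 := maxn m0 j.
have [B [_ [Hnc [_ [Hs R2]]]]] := Hj m1 (leq_maxl _ _) (leq_maxr _ _).
rewrite Hexp /= in R2; set B1 := pick_open B _ in R2.
have HB1 : In (L, inst1 x g (fresh B)) (sfs B1) /\ In (L, All x g, fresh B) (qlog B1).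
  have Hne0 : (inr 0 : TK C) <> fresh B by case.
  have := pick_open_In Hnc (step_partial HL Hs (newc_fresh (B := B)) Hne0).
  by rewrite -/B1 in_map_iff => -[L' [<- _]] /=; split; left.
have RB1 : grows B1 (stage m1.+1) := grows_trans (Hfold _ _) R2.
exists (fresh B); split; first exact: in_limit_of RB1 (proj1 HB1).
move=> c'' Hc'' Hne; have [M HM] := relevant_candidate Hc''.
set m := maxn (maxn m1.+1 M) m1.
have [B2 [R1' [Hnc' [_ [_ R2']]]]] := Hj m ltac:(rewrite /m /m1; lia) ltac:(rewrite /m /m1; lia).
rewrite Hexp /= in R2'; set B3 := pick_open B2 _ in R2'.
have R23 : grows B2 B3 by exact: grows_pick_open.
have Hcm : In c'' (candidates m B3) by apply: HM (grows_trans R1' R23); rewrite /m; lia.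
have [B4 [R5 R6]] := grows_fold_In (f := fun B' c => pick_open B' (reuse_alts B' L x g c))
  B3 (fun B a => grows_pick_open _ _) Hcm.
have Hlog : In (L, All x g, fresh B) (qlog B4).
  apply: (grows_qlog (grows_trans (grows_trans (grows_stage (m := m1.+1) _) R1')
                                  (grows_trans R23 R5))).
    by rewrite /m; lia.
  exact: grows_qlog RB1 (proj2 HB1).
have := pick_open_In (grows_open R5 (grows_open R23 Hnc')) (step_reuse HL Hlog Hne).
rewrite in_map_iff => -[L' [EL' HL']]; exists L'; split => //.
apply: (in_limit_of (m := m.+1) (grows_trans R6 R2')); rewrite -EL' /=; by left.
Qed.

Lemma in_limit_label_unique L L' (f f' : tf) :
  in_limit (L, f) -> in_limit (L', f') -> db f = db f' -> L = L'.
Proof.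
case=> m1 H1; case=> m2 H2 E; apply: NNPP => Hne.
apply: (proj1 (stage_open (maxn m1 m2))); apply: cl_closed.
exists L, f, L', f'; split; first exact: grows_In (grows_stage (leq_maxl _ _)) H1.
split; first exact: grows_In (grows_stage (leq_maxr _ _)) H2.
by split => //; apply/variant_dbE.
Qed.

End Limit.

Section RuleInversion.
Variables (P : Type) (ar : P -> nat) (C : Type) (w : form ar (TK C) -> V4).

Definition realizes (l : seq (sform ar C)) : Prop := forall s, In s l -> w s.2 = s.1.

Lemma realizes_cons L f l : realizes ((L, f) :: l) -> w f = L /\ realizes l.
Proof. by move=> H; split; [exact: H (or_introl erefl)|move=> s Hs; exact: H (or_intror Hs)]. Qed.

Lemma prule_neg_sound L g A l :
  prule (L, Neg g) = Some A -> In l A -> realizes l -> L = negV (w g).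
Proof. by case: L => /= -[<-] [<-|//] /realizes_cons [->]. Qed.

Lemma prule_box_sound L g A l :
  prule (L, Box g) = Some A -> In l A -> realizes l -> boxS (w g) L.
Proof.
by case: L => /= -[<-] /= Hl Hr; intuition subst; case/realizes_cons: Hr => -> _ /=; auto.
Qed.

Lemma prule_imp_sound L a b A l :
  prule (L, Imp a b) = Some A -> In l A -> realizes l -> impS (w a) (w b) L.
Proof.
case: L => /= -[<-] /= Hl Hr; intuition subst;
  repeat match goal with H : realizes (_ :: _) |- _ => case/realizes_cons: H => -> ? end;
  try case: (w a); try case: (w b); rewrite /=; auto.
Qed.

End RuleInversion.

Section CounterValuation.
Variables (P : Type) (ar : P -> nat) (C : Type).
Local Notation br := (branch ar C).
Local Notation tf := (form ar (TK C)).
Local Notation df := (dform ar (TK C)).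
Variables (root : br) (root_open : ~ closable root) (root_log : log_witnessed root).
Local Notation in_limit := (in_limit root).
Local Notation relevant := (relevant root).

Definition limit_label (d : df) : option V4 :=
  match excluded_middle_informative (exists L f, in_limit (L, f) /\ db f = d) with
  | left Hx => Some (proj1_sig (constructive_indefinite_description _ Hx))
  | right _ => None
  end.

Lemma limit_labelE L (f : tf) : in_limit (L, f) -> limit_label (db f) = Some L.
Proof.
move=> Hf; rewrite /limit_label; case: excluded_middle_informative => [Hx|Hn].
- have [f' [Hf' E]] := proj2_sig (constructive_indefinite_description _ Hx).
  f_equal; exact: (in_limit_label_unique root_open root_log Hf' Hf E).
- exfalso; apply: Hn; by exists L, f.
Qed.

Lemma limit_label_Some d L : limit_label d = Some L -> exists f, in_limit (L, f) /\ db f = d.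
Proof.
rewrite /limit_label; case: excluded_middle_informative => [Hx|//].
move=> [<-]; exact: (proj2_sig (constructive_indefinite_description _ Hx)).
Qed.

Fixpoint dsize (d : df) : nat :=
  match d with
  | DAtom _ _ => 1
  | DNeg e | DBox e | DAll e => (dsize e).+1
  | DImp e1 e2 => (dsize e1 + dsize e2).+1
  end.

Lemma dsize_pos d : 0 < dsize d. Proof. by case: d. Qed.

Lemma dsize_open c k d : dsize (open c k d) = dsize d.
Proof.
rewrite /open; elim: d k => //= [e IH|e IH|e IH|e1 IH1 e2 IH2] k; by rewrite ?IH ?IH1 ?IH2.
Qed.

Definition min_relevant (g : TK C -> V4) : V4 :=
  if excluded_middle_informative (exists c, relevant c /\ g c = VF) then VF
  else if excluded_middle_informative (exists c, relevant c /\ g c = Vf) then Vf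
  else if excluded_middle_informative (exists c, relevant c /\ g c = Vt) then Vt
  else VT.

Lemma min_relevant_spec g : (exists c, relevant c /\ min_relevant g = g c) /\
  (forall c, relevant c -> leV (min_relevant g) (g c)).
Proof.
rewrite /min_relevant.
case: excluded_middle_informative => [[c [Hc E]]|N1] /=.
  split; [by exists c; rewrite E|by move=> c' _; rewrite /leV].
case: excluded_middle_informative => [[c [Hc E]]|N2] /=.
  split; first by exists c; rewrite E.
  move=> c' Hc'; rewrite /leV /=; case E': (g c') => //; exfalso; apply: N1; by exists c'.
case: excluded_middle_informative => [[c [Hc E]]|N3] /=.
  split; first by exists c; rewrite E.
  move=> c' Hc'; rewrite /leV /=; case E': (g c') => //; exfalso;
  [apply: N2|apply: N1]; by exists c'.
have HT : forall c, relevant c -> g c = VT.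
  move=> c Hc; case E: (g c) => //; exfalso; [apply: N3|apply: N2|apply: N1]; by exists c.
split; first by exists (inr 0); rewrite HT.
by move=> c Hc; rewrite HT.
Qed.

Definition imp_default (a b : V4) : V4 :=
  match a, b with
  | VT, _ => b
  | Vt, VT | Vt, Vt => VT
  | Vt, _ => Vf
  | Vf, VF => Vt
  | _, _ => VT
  end.

Lemma imp_default_spec a b : impS a b (imp_default a b).
Proof. by case: a; case: b => /=; auto. Qed.

(* The fuel [dsize d] suffices because opening a quantifier body preserves its size. *)
Fixpoint wval_fuel (n : nat) (d : df) : V4 :=
  if n is n'.+1 then
    if limit_label d is Some L then L else
    match d with
    | DAtom _ _ => VT
    | DNeg e => negV (wval_fuel n' e)
    | DBox e => if wval_fuel n' e is VT then VT else Vf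
    | DImp e1 e2 => imp_default (wval_fuel n' e1) (wval_fuel n' e2)
    | DAll e => min_relevant (fun c => wval_fuel n' (open c 0 e))
    end
  else VT.

Definition wval (d : df) : V4 := wval_fuel (dsize d) d.

Lemma wval_fuel_stable n m d : dsize d <= n -> dsize d <= m -> wval_fuel n d = wval_fuel m d.
Proof.
elim: n m d => [|n IH] [|m] d Hn Hm; try (by have := dsize_pos d; lia).
rewrite /=; case: (limit_label d) => //.
case: d Hn Hm => /= [p a|e|e|e|e1 e2] Hn Hm //.
- by rewrite (IH m).
- by rewrite (IH m).
- f_equal; apply: functional_extensionality => c; apply: IH; rewrite dsize_open; lia.
- by rewrite (IH m) ?(IH m e2) //; lia.
Qed.

Lemma wval_label d L : limit_label d = Some L -> wval d = L.
Proof. by rewrite /wval; case: (dsize d) (dsize_pos d) => //= n _ ->. Qed.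

Lemma wval_negE d :
  wval (DNeg d) = if limit_label (DNeg d) is Some L then L else negV (wval d).
Proof. by []. Qed.

Lemma wval_boxE d : wval (DBox d) =
  if limit_label (DBox d) is Some L then L else if wval d is VT then VT else Vf.
Proof. by []. Qed.

Lemma wval_impE d1 d2 : wval (DImp d1 d2) =
  if limit_label (DImp d1 d2) is Some L then L else imp_default (wval d1) (wval d2).
Proof.
rewrite /wval /= (wval_fuel_stable (m := dsize d1) (d := d1)) ?leq_addr //.
by rewrite (wval_fuel_stable (m := dsize d2) (d := d2)) ?leq_addl.
Qed.

Lemma wval_allE e : wval (DAll e) =
  if limit_label (DAll e) is Some L then L else min_relevant (fun c => wval (open c 0 e)).
Proof.
rewrite /wval /=; case: (limit_label _) => //; f_equal; apply: functional_extensionality => c.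
by rewrite dsize_open.
Qed.

Lemma wval_limit L (f : tf) : in_limit (L, f) -> wval (db f) = L.
Proof. by move/limit_labelE/wval_label. Qed.

Lemma in_limit_instance L x (g : tf) :
  in_limit (L, All x g) -> exists c, in_limit (L, inst1 x g c).
Proof.
move=> Hx; have [EL|[HL|EL]] := label_cases L; first (subst L; exists (inr 0)).
- exact: (in_limit_Tall root_open root_log Hx (relevant_inr root 0)).
- by have [c [Hc _]] := in_limit_partial_all root_open root_log HL Hx; exists c.
- by subst L; exact: (in_limit_Fall root_open root_log Hx).
Qed.

Definition nonvoid_head (f : tf) : Prop := forall x g, f = All x g -> freeb x g.

(* A void quantifier is its own instance, so void heads can be stripped inside the limit. *)
Lemma in_limit_nonvoid L (f : tf) : in_limit (L, f) ->
  exists f0, in_limit (L, f0) /\ db f0 = db f /\ nonvoid_head f0.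
Proof.
elim: f L => [p ts|g IH|g IH|x g IH|g IHg h IHh] L Hf;
  try by eexists; split; [exact: Hf|split => // ? ? E; discriminate E].
case Hb: (freeb x g); first by exists (All x g); split => //; split => // y g' [<- <-].
have [c Hc] := in_limit_instance Hf.
rewrite /inst1 subst1_nofree in Hc; last by move/freeP; rewrite Hb.
have [f0 [H0 [E0 N0]]] := IH L Hc.
by exists f0; split => //; split => //; rewrite E0 /= Hb.
Qed.

Lemma limit_label_nonvoid d L : limit_label d = Some L ->
  exists f, in_limit (L, f) /\ db f = d /\ nonvoid_head f.
Proof.
move/limit_label_Some => [f [Hf <-]].
have [f0 [H0 [E0 N0]]] := in_limit_nonvoid Hf; by exists f0.
Qed.

Lemma in_limit_realized s A : in_limit s -> prule s = Some A ->
  exists l, In l A /\ realizes (fun f => wval (db f)) l.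
Proof.
move=> Hs EA; have [l [Hl Hall]] := in_limit_prule root_open root_log Hs EA.
by exists l; split => // -[L f] /Hall /wval_limit.
Qed.

Lemma db_inst y (g : tf) c : db (inst1 y g c) = open c 0 (close y 0 (db g)).
Proof. rewrite /inst1 db_subst1 // open_close //; exact: lc_db. Qed.

Lemma wval_neg d : wval (DNeg d) = negV (wval d).
Proof.
rewrite wval_negE; case E: (limit_label (DNeg d)) => [L|] //.
have [[p ts|g|g|x g|g h] [H0 [E0 N0]]] := limit_label_nonvoid E; try discriminate E0.
- case: E0 => <-; case EA: (prule (L, Neg g)) => [A|]; last by case: L EA {E H0}.
  have [l [Hl Hw]] := in_limit_realized H0 EA; exact: prule_neg_sound EA Hl Hw.
- by move: E0; rewrite /= (N0 x g erefl).
Qed.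

Lemma wval_box d : boxS (wval d) (wval (DBox d)).
Proof.
rewrite wval_boxE; case E: (limit_label (DBox d)) => [L|]; last by case: (wval d) => /=; auto.
have [[p ts|g|g|x g|g h] [H0 [E0 N0]]] := limit_label_nonvoid E; try discriminate E0.
- case: E0 => <-; case EA: (prule (L, Box g)) => [A|]; last by case: L EA {E H0}.
  have [l [Hl Hw]] := in_limit_realized H0 EA; exact: prule_box_sound EA Hl Hw.
- by move: E0; rewrite /= (N0 x g erefl).
Qed.

Lemma wval_imp d1 d2 : impS (wval d1) (wval d2) (wval (DImp d1 d2)).
Proof.
rewrite wval_impE; case E: (limit_label (DImp d1 d2)) => [L|]; last exact: imp_default_spec.
have [[p ts|g|g|x g|g h] [H0 [E0 N0]]] := limit_label_nonvoid E; try discriminate E0.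
- by move: E0; rewrite /= (N0 x g erefl).
- case: E0 => <- <-; case EA: (prule (L, Imp g h)) => [A|]; last by case: L EA {E H0}.
  have [l [Hl Hw]] := in_limit_realized H0 EA; exact: prule_imp_sound EA Hl Hw.
Qed.

Lemma reuse_labels_ge L L' : In L' (reuse_labels L) -> L = Vt \/ L = Vf -> leV L L'.
Proof. by case: L => /=; intuition subst. Qed.

Lemma wval_all e : (exists c, relevant c /\ wval (DAll e) = wval (open c 0 e)) /\
  (forall c, relevant c -> leV (wval (DAll e)) (wval (open c 0 e))).
Proof.
rewrite wval_allE; case E: (limit_label (DAll e)) => [L|]; last exact: min_relevant_spec.
have [[p ts|g|g|y g|g h] [H0 [E0 N0]]] := limit_label_nonvoid E; try discriminate E0.
move: E0; rewrite /= (N0 y g erefl) => -[<-].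
have Wi L' c : in_limit (L', inst1 y g c) -> wval (open c 0 (close y 0 (db g))) = L'.
  by rewrite -db_inst; exact: wval_limit.
have Ri L' c : in_limit (L', inst1 y g c) -> relevant c.
  case: c => [c0|n] Hc //=; exists (L', inst1 y g (inl c0)); split => //=.
  by apply: occurs_subst1; apply/freeP; exact: N0.
have [EL|[HL|EL]] := label_cases L.
- subst L; have HT c : relevant c -> in_limit (VT, inst1 y g c).
    exact: (in_limit_Tall root_open root_log H0).
  split; first by exists (inr 0); rewrite (Wi _ _ (HT _ (relevant_inr root 0))).
  by move=> c Hc; rewrite (Wi _ _ (HT _ Hc)).
- have [c [Hc Hr]] := in_limit_partial_all root_open root_log HL H0.
  split; first by exists c; split; [exact: Ri Hc|rewrite (Wi _ _ Hc)].
  move=> c'' Hg; case: (classic (c'' = c)) => [->|Hne]; first by rewrite (Wi _ _ Hc) /leV.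
  have [L' [HL' /Wi ->]] := Hr c'' Hg Hne; exact: reuse_labels_ge HL' HL.
- subst L; have [c Hc] := in_limit_Fall root_open root_log H0.
  split; first by exists c; split; [exact: Ri Hc|rewrite (Wi _ _ Hc)].
  by move=> c'' _; rewrite /leV.
Qed.

End CounterValuation.

Section CounterModel.
Variables (P : Type) (ar : P -> nat) (C : Type).
Variables (root : branch ar C) (root_open : ~ closable root) (root_log : log_witnessed root).

Definition cm_dom : Type := {c : TK C | relevant root c}.

(* Old constants outside the limit play no role; they are sent to [inr 0]. *)
Definition cm_const (c : C) : cm_dom :=
  match excluded_middle_informative (relevant root (inl c)) with
  | left h => exist _ (inl c) h
  | right _ => exist _ (inr 0) (relevant_inr root 0)
  end.

Definition cm_pred (p : P) (a : 'I_(ar p) -> cm_dom) : V4 :=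
  wval root (DAtom (fun i => DC (proj1_sig (a i)))).

Definition cm_name (k : UK cm_const) : TK C := proj1_sig (uint k).

Definition cm_val (f : form ar (UK cm_const)) : V4 := wval root (db (mapK cm_name f)).

Lemma cm_name_onto t : relevant root t -> exists k, cm_name k = t.
Proof.
move=> Ht; pose u : cm_dom := exist _ t Ht.
case: (classic (exists c, cm_const c = u)) => [[c Hc]|Hn].
  by exists (inl c); rewrite /cm_name /= Hc.
have Hu : forall c, cm_const c <> u by move=> c E; apply: Hn; exists c.
by exists (inr (exist _ u Hu)).
Qed.

Lemma cm_val_all x f :
  (exists k, cm_val (All x f) = cm_val (subst1 x (Con k) f)) /\
  (forall k, leV (cm_val (All x f)) (cm_val (subst1 x (Con k) f))).
Proof.
have Hinst k : cm_val (subst1 x (Con k) f) =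
    wval root (repl x (DC (cm_name k)) (db (mapK cm_name f))).
  by rewrite /cm_val mapK_subst1 db_subst1.
case Hb: (freeb x (mapK cm_name f)).
- have -> : cm_val (All x f) = wval root (DAll (close x 0 (db (mapK cm_name f)))).
    by rewrite /cm_val /= Hb.
  have [[c [Hc Ec]] Hle] := wval_all root_open root_log (close x 0 (db (mapK cm_name f))).
  split.
  + have [k Hk] := cm_name_onto Hc; exists k.
    by rewrite Hinst Hk Ec open_close //; exact: lc_db.
  + move=> k; rewrite Hinst -open_close; last exact: lc_db.
    exact: Hle (proj2_sig (uint k)).
- have Hnf : ~ free x f by rewrite -(free_mapK cm_name) => /freeP; rewrite Hb.
  have -> : cm_val (All x f) = cm_val f by rewrite /cm_val /= Hb.
  have [k0 _] := cm_name_onto (relevant_inr root 0).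
  split; first by exists k0; rewrite subst1_nofree.
  by move=> k; rewrite subst1_nofree // /leV.
Qed.

Lemma cm_valuation : valuation cm_pred cm_val.
Proof.
split; first by [].
split; first by move=> f _; exact: wval_neg.
split; first by move=> f _; exact: wval_box.
split; first by move=> f g _ _; exact: wval_imp.
split; first by move=> x f _; exact: cm_val_all.
by move=> f g _ _ /(variant_mapK cm_name) Efg; rewrite /cm_val Efg.
Qed.

Lemma cm_val_inl (f : form ar C) : (forall c, occurs c f -> relevant root (inl c)) ->
  cm_val (mapK inl f) = wval root (db (mapK inl f)).
Proof.
move=> Hf; rewrite /cm_val mapK_comp; congr (wval root (db _)); apply: mapK_ext_occ => c Hc.
by rewrite /cm_name /= /cm_const; case: excluded_middle_informative => // /(_ (Hf c Hc)).
Qed.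

End CounterModel.

Lemma impS_undesignated x y z :
  impS x y z -> (z = Vf \/ z = VF) -> designated x /\ (y = Vf \/ y = VF).
Proof. rewrite /designated; case: x; case: y; case: z => /=; intuition discriminate. Qed.

Section ImplicationChain.
Variables (P : Type) (ar : P -> nat) (K : Type).

Lemma imp_chain_undesignated (w : form ar K -> V4) (Gamma : seq (form ar K)) phi :
  (forall a b, impS (w a) (w b) (w (Imp a b))) ->
  (w (foldr (@Imp _ _ _) phi Gamma) = Vf \/ w (foldr (@Imp _ _ _) phi Gamma) = VF) ->
  (forall g, In g Gamma -> designated (w g)) /\ (w phi = Vf \/ w phi = VF).
Proof.
move=> Hw; elim: Gamma => [|a G IH] Hv; first by split.
have [Ha /IH [IH1 IH2]] := impS_undesignated (Hw a (foldr (@Imp _ _ _) phi G)) Hv.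
by split => // g /= [<-|Hg]; [exact: Ha|exact: IH1].
Qed.

Lemma occurs_foldr c (Gamma : seq (form ar K)) phi g :
  (In g Gamma \/ g = phi) -> occurs c g -> occurs c (foldr (@Imp _ _ _) phi Gamma).
Proof.
elim: Gamma => /= [|a G IH]; first by case=> [//|->].
case=> [[E|Hg]|E] Ho; first by left; rewrite E.
- by right; exact: IH (or_introl Hg) Ho.
- by right; exact: IH (or_intror E) Ho.
Qed.

End ImplicationChain.

Section Completeness.
Variables (P : Type) (ar : P -> nat) (C : Type).

Lemma closed_tableau_of_sem_conseq (Gamma : seq (form ar C)) phi L0 :
  (forall g, In g Gamma -> is_closed g) -> is_closed phi -> sem_conseq Gamma phi ->
  L0 = VF \/ L0 = Vf -> closed_tableau (L0, mapK inl (foldr (@Imp _ _ _) phi Gamma)).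
Proof.
move=> HGamma Hphi Hsem HL0; apply: NNPP => Hopen.
set chain := foldr (@Imp _ _ _) phi Gamma.
set root : branch ar C := Branch [:: (L0, mapK inl chain)] [::].
have Hlog : log_witnessed root by move=> ? ? ? ? [].
have Hchain : in_limit root (L0, mapK inl chain) by exists 0; left.
have Hrel g : In g Gamma \/ g = phi -> forall c, occurs c g -> relevant root (inl c).
  move=> Hg c Hc; exists (L0, mapK inl chain); split => //=.
  by apply: occurs_mapK; exact: occurs_foldr Hg Hc.
have Hroot : wval root (db (mapK inl chain)) = Vf \/ wval root (db (mapK inl chain)) = VF.
  by rewrite (wval_limit Hopen Hlog Hchain); case: HL0 => ->; auto.
have [HG Hnphi] := imp_chain_undesignated (w := fun f => wval root (db (mapK inl f)))
  (fun a b => wval_imp Hopen Hlog _ _) Hroot.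
have Hcm g (s : nat -> UK (cm_const root)) : In g Gamma \/ g = phi ->
    cm_val (inst s (mapK inl g)) = wval root (db (mapK inl g)).
  move=> Hg; rewrite inst_closed; last by apply: closed_mapK; case: Hg => [/HGamma|->].
  exact: cm_val_inl (Hrel g Hg).
have [k0 _] := cm_name_onto (relevant_inr root 0).
suff : designated (cm_val (inst (fun _ => k0) (mapK inl phi))).
  by rewrite Hcm; [case: Hnphi => -> [] | right].
apply: (Hsem _ (inhabits (exist _ _ (relevant_inr root 0))) _ _ _ (cm_valuation Hopen Hlog)).
by move=> g Hg s; rewrite Hcm; [exact: HG | left].
Qed.

End Completeness.

Theorem mainTheorem4 (P : Type) (ar : P -> nat)
  (Har : forall p : P, 1 <= ar p) (HP : inhabited P) (C : Type)
  (Gamma : seq (form ar C)) (phi : form ar C) :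
  NoDup Gamma ->
  (forall g, In g Gamma -> is_closed g) -> is_closed phi ->
  sem_conseq Gamma phi -> tab_conseq Gamma phi.
Proof.
move=> _ HGamma Hphi Hsem.
by split; apply: closed_tableau_of_sem_conseq => //; [left|right].
Qed.
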